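(* Let $P$ be a finite $(3+1)$-free poset and let $a,b,c\in P$. Then: (i) if $a\approx b$ and $b\approx c$, then $a\approx c$; (ii) if $a\mathrel{\top} b$ and $b\approx c$, then $a\mathrel{\top} c$; (iii) if $a\mathrel{\bot} b$ and $b\approx c$, then $a\mathrel{\bot} c$; (iv) if $a\mathrel{\top} b$, then $U_a=U_b$; (v) if $a\mathrel{\bot} b$, then $D_a=D_b$; (vi) $v(a)$ and $v(b)$ are incomparable in the view order if and only if $a\mathrel{\top} b$ or $a\mathrel{\bot} b$; (vii) it is not the case that both $a\mathrel{\top} b$ and $b\mathrel{\bot} c$.
   Context: A poset $P$ is $(3+1)$-free if there are no $a,b,c,d\in P$ with $a<b<c$ and $d$ incomparable to each of $a,b,c$. For $a\in P$ let $D_a=\{x\in P: x<a\}$ and $U_a=\{x\in P: x>a\}$. Write $a\mathrel{\top} b$ if neither of the sets $D_a,D_b$ contains the other, and $a\mathrel{\bot} b$ if neither of the sets $U_a,U_b$ contains the other. Write $a\approx b$ (clones) if $D_a=D_b$ and $U_a=U_b$. The view of $a$ is $v(a)=(D_a,P\setminus U_a)$; views are ordered by $v(a)\le v(b)$ iff $D_a\subseteq D_b$ and $U_a\supseteq U_b$, and $v(a),v(b)$ are incomparable if neither $v(a)\le v(b)$ nor $v(b)\le v(a)$. *)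

From mathcomp Require Import all_boot all_order.
Set Implicit Arguments. Unset Strict Implicit. Unset Printing Implicit Defensive.
Import Order.TTheory.
Local Open Scope order_scope.

Section PosetDefs.
Context {disp : Order.disp_t} {P : finPOrderType disp}.

Definition three_one_free : Prop :=
  ~ exists a b c d : P, [/\ a < b, b < c, d >< a, d >< b & d >< c].

Definition Dn (a : P) : {set P} := [set x | x < a].
Definition Up (a : P) : {set P} := [set x | a < x].

Definition top_rel (a b : P) : Prop :=
  ~~ (Dn a \subset Dn b) /\ ~~ (Dn b \subset Dn a).
Definition bot_rel (a b : P) : Prop :=
  ~~ (Up a \subset Up b) /\ ~~ (Up b \subset Up a).
Definition clone (a b : P) : Prop := Dn a = Dn b /\ Up a = Up b.

Definition view (a : P) : {set P} * {set P} := (Dn a, ~: Up a).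
Definition view_le (a b : P) : Prop :=
  Dn a \subset Dn b /\ Up b \subset Up a.
Definition view_incomp (a b : P) : Prop := ~ view_le a b /\ ~ view_le b a.

End PosetDefs.

From mathcomp Require Import all_boot all_order.
Set Implicit Arguments. Unset Strict Implicit. Unset Printing Implicit Defensive.
Import Order.TTheory.
Local Open Scope order_scope.

(* Everything rests on one consequence of (3+1)-freeness: for any a, b,
   D_b ⊆ D_a or U_b ⊆ U_a.  Otherwise some x < b is not below a and some
   y > b is not above a; then a is incomparable to each element of the
   chain x < b < y.  Applied to (a, b) and (b, a), this turns the failure of
   one inclusion between the down-sets into the opposite inclusions between
   the up-sets, and vice versa, which gives (iv)-(vii). *)

Section ThreeOneFree.
Context {disp : Order.disp_t} {P : finPOrderType disp}.
Hypothesis P31 : @three_one_free disp P.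

Lemma Dn_or_Up_subset (a b : P) : (Dn b \subset Dn a) || (Up b \subset Up a).
Proof.
apply: contraT => /norP[/subsetPn[x xb xa] /subsetPn[y yb ya]].
rewrite !inE in xb xa yb ya.
have ab : a >< b.
  apply/negP => /comparable_ltgtP[ab|ba|eab].
  - by rewrite (lt_trans ab yb) in ya.
  - by rewrite (lt_trans xb ba) in xa.
  - by rewrite eab xb in xa.
have ax : a >< x.
  apply/negP => /comparable_ltgtP[ax|xa'|eax].
  - by rewrite (lt_comparable (lt_trans ax xb)) in ab.
  - by rewrite xa' in xa.
  - by rewrite eax (lt_comparable xb) in ab.
have ay : a >< y.
  apply/negP => /comparable_ltgtP[ay|ya'|eay].
  - by rewrite ay in ya.
  - by rewrite comparable_sym (lt_comparable (lt_trans yb ya')) in ab.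
  - by rewrite eay comparable_sym (lt_comparable yb) in ab.
by case: P31; exists x, b, y, a.
Qed.

Lemma top_rel_Up (a b : P) : top_rel a b -> Up a = Up b.
Proof.
move=> [/negbTE nab /negbTE nba]; apply/eqP; rewrite eqEsubset.
by move: (Dn_or_Up_subset a b) (Dn_or_Up_subset b a); rewrite nab nba /= => -> ->.
Qed.

Lemma bot_rel_Dn (a b : P) : bot_rel a b -> Dn a = Dn b.
Proof.
move=> [/negbTE nab /negbTE nba]; apply/eqP; rewrite eqEsubset.
by move: (Dn_or_Up_subset a b) (Dn_or_Up_subset b a); rewrite nab nba !orbF => -> ->.
Qed.

Lemma view_incompP (a b : P) : view_incomp a b <-> top_rel a b \/ bot_rel a b.
Proof.
rewrite /view_incomp /view_le /top_rel /bot_rel.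
have := Dn_or_Up_subset a b; have := Dn_or_Up_subset b a.
case: (Dn a \subset Dn b); case: (Dn b \subset Dn a);
case: (Up a \subset Up b); case: (Up b \subset Up a); by intuition.
Qed.

Lemma not_top_rel_bot_rel (a b c : P) : ~ (top_rel a b /\ bot_rel b c).
Proof.
move=> [tab bbc]; have [_ /negP nDba] := tab; have [_ /negP nUcb] := bbc.
rewrite (bot_rel_Dn bbc) in nDba; rewrite -(top_rel_Up tab) in nUcb.
by case/orP: (Dn_or_Up_subset a c).
Qed.

End ThreeOneFree.

Theorem lemma2p6 (disp : Order.disp_t) (P : finPOrderType disp)
  (H31 : @three_one_free disp P) (a b c : P) :
  (clone a b -> clone b c -> clone a c) /\
  (top_rel a b -> clone b c -> top_rel a c) /\
  (bot_rel a b -> clone b c -> bot_rel a c) /\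
  (top_rel a b -> Up a = Up b) /\
  (bot_rel a b -> Dn a = Dn b) /\
  (view_incomp a b <-> top_rel a b \/ bot_rel a b) /\
  ~ (top_rel a b /\ bot_rel b c).
Proof.
split; first by rewrite /clone => -[-> ->] [-> ->].
split; first by move=> tab [Dbc _]; rewrite /top_rel -Dbc.
split; first by move=> bab [_ Ubc]; rewrite /bot_rel -Ubc.
split; first exact: top_rel_Up.
split; first exact: bot_rel_Dn.
split; first exact: view_incompP.
exact: not_top_rel_bot_rel.
Qed.
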